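(* In the two-period setting of the context, assume $\frac{\hat\ell_n^P}{E_n}+\frac12\ge\frac{\hat\ell^P}{E}$ for all $n$. For $\alpha\in[0,1]$ let $\mathrm{SC}^{\mathrm{DP}}_\alpha$ denote the social cost $\sum_{n}f_n^\alpha(\boldsymbol\ell)$ evaluated at a Nash equilibrium $\boldsymbol\ell$ of $\mathcal G^{\mathrm{DP}}_\alpha$. Then $\mathrm{SC}^{\mathrm{DP}}_\alpha=(1-\alpha)\big[\frac{E^2}{2}+\frac{D^2}{2}(\alpha^2+V_E(1-\alpha)\alpha)\big]$ with $D=\hat\ell^P-\hat\ell^O$ and $V_E=\sum_n E_n^2/E^2$, and $\alpha\mapsto\mathrm{SC}^{\mathrm{DP}}_\alpha$ is a decreasing function of $\alpha$ on $[0,1]$.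
   Context: Two-period setting: users $\mathcal N=\{1,\dots,N\}$, periods $\mathcal H=\{P,O\}$. Each user $n$ has energy demand $E_n>0$ and preferred profile $(\hat\ell_n^P,\hat\ell_n^O)$ with $\hat\ell_n^h\ge0$, $\hat\ell_n^P+\hat\ell_n^O=E_n$; $E=\sum_nE_n$, $\hat\ell^h=\sum_n\hat\ell_n^h$, and $\hat\ell^P\ge\frac E2\ge\hat\ell^O$. Feasible set $\mathcal L_n=\{(\ell_n^P,\ell_n^O):\ell_n^P+\ell_n^O=E_n,\ \ell_n^P,\ell_n^O\ge0\}$, $\ell^h=\sum_n\ell_n^h$. Costs $C_h(x)=x^2$, utilities $u_n(\boldsymbol\ell_n)=-\sum_h(\ell_n^h-\hat\ell_n^h)^2$. DP bill $b_n^{\mathrm{DP}}=\frac{E_n}{E}((\ell^P)^2+(\ell^O)^2)$. In $\mathcal G^{\mathrm{DP}}_\alpha$ user $n$ minimizes $f_n^\alpha=(1-\alpha)b_n^{\mathrm{DP}}-\alpha u_n(\boldsymbol\ell_n)$ over $\mathcal L_n$. (For $\alpha\in(0,1]$ the equilibrium is unique; for $\alpha=0$ all equilibria have the same social cost $E^2/2$.) *)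

From mathcomp Require Import all_boot all_order all_algebra.
Set Implicit Arguments. Unset Strict Implicit. Unset Printing Implicit Defensive.
Import Order.TTheory GRing.Theory Num.Theory.
Local Open Scope ring_scope.

Section DP.
Variables (R : realFieldType) (N : nat).
(* Users are indexed by 'I_N; the two periods P (peak) and O (off-peak) are
   represented by two separate load vectors. *)
Variables (E hlP hlO : 'I_N -> R).

Definition Etot : R := \sum_(n < N) E n.
Definition totload (l : 'I_N -> R) : R := \sum_(n < N) l n.

Definition feasible (n : 'I_N) (p o : R) : Prop := p + o = E n /\ 0 <= p /\ 0 <= o.

Definition bill_DP (n : 'I_N) (lP lO : 'I_N -> R) : R :=
  E n / Etot * ((totload lP) ^+ 2 + (totload lO) ^+ 2).

Definition util (n : 'I_N) (p o : R) : R :=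
  - ((p - hlP n) ^+ 2 + (o - hlO n) ^+ 2).

Definition fobj (a : R) (n : 'I_N) (lP lO : 'I_N -> R) : R :=
  (1 - a) * bill_DP n lP lO - a * util n (lP n) (lO n).

Definition upd (l : 'I_N -> R) (n : 'I_N) (x : R) : 'I_N -> R :=
  fun m => if m == n then x else l m.

Definition is_NE (a : R) (lP lO : 'I_N -> R) : Prop :=
  (forall n, feasible n (lP n) (lO n)) /\
  (forall n p o, feasible n p o ->
     fobj a n lP lO <= fobj a n (upd lP n p) (upd lO n o)).

Definition SC (a : R) (lP lO : 'I_N -> R) : R := \sum_(n < N) fobj a n lP lO.

Definition Dgap : R := totload hlP - totload hlO.
Definition VE : R := (\sum_(n < N) E n ^+ 2) / Etot ^+ 2.

Definition SC_formula (a : R) : R :=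
  (1 - a) * (Etot ^+ 2 / 2 + Dgap ^+ 2 / 2 * (a ^+ 2 + VE * (1 - a) * a)).
End DP.

(* At an equilibrium every user's first-order condition holds in the direction
   of [ne_peak a n], the preferred peak load shifted by
   -(1 - a) (hlP/E - 1/2) E_n, which is feasible by the share hypothesis.
   Weighting these conditions by 1/E_n and summing yields
   -2 ((1 - a) T^2 / E + a sum_n t_n^2 / E_n) >= 0, where t_n is the gap to
   [ne_peak] and T its total: every equilibrium has the aggregate peak load of
   [ne_peak] and, when a > 0, the same individual peak loads. This pins down
   the social cost. For monotonicity, phi(a) - phi(b) = (b - a)/2 (E^2 - D^2 H)
   with H < 1 and D^2 <= E^2. *)

From mathcomp Require Import all_boot all_order all_algebra.
From mathcomp Require Import ring lra.
Import Order.TTheory GRing.Theory Num.Theory.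
Local Open Scope ring_scope.

Lemma ge0_linear_coef (R : realFieldType) (A B : R) :
  (forall s, 0 < s -> s <= 1 -> 0 <= s * A + s ^+ 2 * B) -> 0 <= A.
Proof.
move=> H; rewrite leNgt; apply/negP => A_lt0.
have normB_ge0 := normr_ge0 B.
have den_gt0 : 0 < - A + `|B| by lra.
pose s := - A / (- A + `|B|).
have s_gt0 : 0 < s by apply: divr_gt0; lra.
have s_le1 : s <= 1 by rewrite ler_pdivrMr // mul1r; lra.
have sB_lt : A + s * `|B| < 0.
  have -> : A + s * `|B| = - (A ^+ 2 / (- A + `|B|)) by rewrite /s; field; lra.
  by rewrite oppr_lt0; apply: divr_gt0 => //; rewrite exprn_even_gt0 //= lt_eqF.
have := H s s_gt0 s_le1.
have : s * B <= s * `|B| by rewrite ler_pM2l // ler_norm.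
nra.
Qed.

Lemma mul_sqr_eq0 (R : idomainType) (x y : R) : x * y ^+ 2 = 0 -> x * y = 0.
Proof.
by move=> xy2_0; apply/eqP; rewrite -sqrf_eq0 exprMn expr2 -mulrA xy2_0 mulr0.
Qed.

Lemma cubic_cost_decreasing (R : realFieldType) (Et W V a b : R) :
  0 < Et -> 0 <= W <= Et ^+ 2 -> 0 <= V <= 1 -> 0 <= a -> a < b -> b <= 1 ->
  (1 - b) * (Et ^+ 2 / 2 + W / 2 * (b ^+ 2 + V * (1 - b) * b)) <
  (1 - a) * (Et ^+ 2 / 2 + W / 2 * (a ^+ 2 + V * (1 - a) * a)).
Proof.
move=> Et_gt0 /andP[W_ge0 W_le] /andP[V_ge0 V_le1] a_ge0 ab b_le1.
pose H := V + (1 - 2 * V) * (a + b) - (1 - V) * (a ^+ 2 + a * b + b ^+ 2).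
have H_lt1 : H < 1.
  have X_gt0 : 0 < 1 - (a + b) + (a ^+ 2 + a * b + b ^+ 2) by nra.
  have -> : H = 1 - ((1 - V) * (1 - (a + b) + (a ^+ 2 + a * b + b ^+ 2)) + V * (a + b)).
    by rewrite /H; ring.
  rewrite gtrBl.
  have [V_lt1 | V_ge1] := ltrP V 1.
    have : 0 < (1 - V) * (1 - (a + b) + (a ^+ 2 + a * b + b ^+ 2)) by apply: mulr_gt0; lra.
    have : 0 <= V * (a + b) by apply: mulr_ge0; lra.
    lra.
  by rewrite (_ : V = 1) ?mul1r; lra.
have WH_lt : W * H < Et ^+ 2.
  have Et2_gt0 : 0 < Et ^+ 2 by exact: exprn_gt0.
  have [H_le0 | H_gt0] := lerP H 0.
    by have := mulr_ge0_le0 W_ge0 H_le0; lra.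
  have : W * H <= Et ^+ 2 * H by rewrite ler_pM2r.
  have : Et ^+ 2 * H < Et ^+ 2 by rewrite gtr_pMr.
  lra.
suff -> : (1 - a) * (Et ^+ 2 / 2 + W / 2 * (a ^+ 2 + V * (1 - a) * a))
        = (1 - b) * (Et ^+ 2 / 2 + W / 2 * (b ^+ 2 + V * (1 - b) * b))
          + (b - a) / 2 * (Et ^+ 2 - W * H).
  by rewrite ltrDl; apply: mulr_gt0; lra.
by rewrite /H; ring.
Qed.

Section DPGame.
Context {R : realFieldType} {N : nat} {E hlP hlO : 'I_N -> R}.
Hypothesis N_gt0 : (0 < N)%N.
Hypothesis E_gt0 : forall n, 0 < E n.
Hypothesis hlP_ge0 : forall n, 0 <= hlP n.
Hypothesis hlO_ge0 : forall n, 0 <= hlO n.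
Hypothesis hl_sum : forall n, hlP n + hlO n = E n.
Hypothesis peak_heavy : Etot E / 2 <= totload hlP.
Hypothesis peak_share_bound : forall n, totload hlP / Etot E <= hlP n / E n + 1 / 2.

Lemma E_le_Etot n : E n <= Etot E.
Proof.
rewrite /Etot (bigD1 n) //= lerDl.
by apply: sumr_ge0 => m _; apply/ltW.
Qed.

Lemma Etot_gt0 : 0 < Etot E.
Proof. exact: lt_le_trans (E_gt0 (Ordinal N_gt0)) (E_le_Etot _). Qed.

Lemma Etot_neq0 : Etot E != 0.
Proof. by rewrite gt_eqF // Etot_gt0. Qed.

Lemma VE_ge0 : 0 <= VE E.
Proof. by apply: divr_ge0; [apply: sumr_ge0 => n _ | ]; apply: sqr_ge0. Qed.

Lemma VE_le1 : VE E <= 1.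
Proof.
rewrite /VE ler_pdivrMr ?exprn_gt0 ?Etot_gt0 // mul1r.
rewrite [X in _ <= X]expr2 {2}/Etot mulr_sumr.
apply: ler_sum => n _; rewrite expr2 mulrC ler_wpM2r ?E_le_Etot //.
exact/ltW.
Qed.

Lemma totload_sum {lP lO : 'I_N -> R} :
  (forall n, lP n + lO n = E n) -> totload lP + totload lO = Etot E.
Proof.
by move=> l_sum; rewrite /totload /Etot -big_split; apply: eq_bigr => n _; exact: l_sum.
Qed.

Lemma Dgap_sqr_le : Dgap hlP hlO ^+ 2 <= Etot E ^+ 2.
Proof.
have HP_ge0 : 0 <= totload hlP by apply: sumr_ge0.
have HO_ge0 : 0 <= totload hlO by apply: sumr_ge0.
have := mulr_ge0 HP_ge0 HO_ge0.
rewrite /Dgap -(totload_sum hl_sum); nra.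
Qed.

Lemma totload_upd (l : 'I_N -> R) n x :
  totload (upd l n x) = totload l - l n + x.
Proof.
rewrite /totload (bigD1 n) //= [in RHS](bigD1 n) //= /upd eqxx.
rewrite (eq_bigr l) => [|m /negbTE -> //]; ring.
Qed.

Definition slope (a : R) (lP lO : 'I_N -> R) (n : 'I_N) : R :=
  (1 - a) * (E n / Etot E) * (totload lP - totload lO) + 2 * a * (lP n - hlP n).

Lemma fobj_shift (a : R) (lP lO : 'I_N -> R) n d : lP n + lO n = E n ->
  fobj E hlP hlO a n (upd lP n (lP n + d)) (upd lO n (lO n - d))
  = fobj E hlP hlO a n lP lO + 2 * d * slope a lP lO n
    + 2 * d ^+ 2 * ((1 - a) * (E n / Etot E) + a).
Proof.
move=> l_sum; have hlO_n : hlO n = E n - hlP n by rewrite -(hl_sum n); ring.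
rewrite /fobj /bill_DP /util /slope !totload_upd /upd !eqxx hlO_n -l_sum.
ring.
Qed.

Lemma NE_slope (a : R) (lP lO : 'I_N -> R) n q :
  is_NE E hlP hlO a lP lO -> 0 <= q <= E n -> 0 <= (q - lP n) * slope a lP lO n.
Proof.
move=> [feas NE] /andP[q_ge0 q_le]; have [l_sum [p_ge0 o_ge0]] := feas n.
pose d := q - lP n; pose c := 2 * ((1 - a) * (E n / Etot E) + a).
suff : 0 <= 2 * (d * slope a lP lO n) by rewrite pmulr_rge0.
apply: (@ge0_linear_coef _ _ (d ^+ 2 * c)) => s s_gt0 s_le1.
have shift_feas : feasible E n (lP n + s * d) (lO n - s * d).
  by split; [rewrite -l_sum; ring | rewrite /d; split; nra].
have := NE n _ _ shift_feas; rewrite fobj_shift // -subr_ge0.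
by congr (0 <= _); rewrite /c; ring.
Qed.

Definition ne_peak (a : R) (n : 'I_N) : R :=
  hlP n - (1 - a) * (totload hlP / Etot E - 1 / 2) * E n.

Lemma ne_peak_feasible (a : R) n : 0 <= a <= 1 -> 0 <= ne_peak a n <= E n.
Proof.
move=> /andP[a_ge0 a_le1]; have En_gt0 := E_gt0 n.
have excess_ge0 : 0 <= totload hlP / Etot E - 1 / 2.
  by rewrite subr_ge0 ler_pdivlMr ?Etot_gt0 // mulrC mul1r.
have share : (totload hlP / Etot E - 1 / 2) * E n <= hlP n.
  by rewrite -ler_pdivlMr //; have := peak_share_bound n; lra.
have hl_n := hl_sum n; have hlO_n := hlO_ge0 n.
have cE_ge0 := mulr_ge0 excess_ge0 (ltW En_gt0).
have acE_ge0 := mulr_ge0 a_ge0 cE_ge0.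
have a1cE_ge0 : 0 <= (1 - a) * (totload hlP / Etot E - 1 / 2) * E n.
  by rewrite -mulrA; apply: mulr_ge0 => //; lra.
rewrite /ne_peak; apply/andP; split; lra.
Qed.

Lemma totload_ne_peak (a : R) :
  totload (ne_peak a) = totload hlP - (1 - a) * (totload hlP / Etot E - 1 / 2) * Etot E.
Proof. by rewrite /totload /ne_peak sumrB -mulr_sumr. Qed.

Lemma slope_ne_peak (a : R) (lP lO : 'I_N -> R) n : (forall m, lP m + lO m = E m) ->
  slope a lP lO n = - 2 * ((1 - a) * (totload (ne_peak a) - totload lP) / Etot E * E n
                          + a * (ne_peak a n - lP n)).
Proof.
move=> l_sum; have LO_eq : totload lO = Etot E - totload lP.
  by rewrite -(totload_sum l_sum); ring.
rewrite /slope LO_eq totload_ne_peak /ne_peak; field; exact: Etot_neq0.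
Qed.

Lemma NE_ne_peak {a : R} {lP lO : 'I_N -> R} : 0 <= a <= 1 -> is_NE E hlP hlO a lP lO ->
  (1 - a) * (totload lP - totload (ne_peak a)) = 0 /\
  forall n, a * (lP n - ne_peak a n) = 0.
Proof.
move=> a01 NE; have /andP[a_ge0 a_le1] := a01.
have l_sum n : lP n + lO n = E n by case: (NE.1 n).
pose t n := ne_peak a n - lP n; pose T := \sum_(n < N) t n.
have T_eq : T = totload (ne_peak a) - totload lP by rewrite /T /t sumrB.
have tsE_ge0 : 0 <= \sum_(n < N) t n * slope a lP lO n / E n.
  apply: sumr_ge0 => n _; apply: divr_ge0; last exact/ltW.
  by apply: NE_slope; rewrite ?ne_peak_feasible.
have tsE_eq : \sum_(n < N) t n * slope a lP lO n / E n
            = - 2 * ((1 - a) * T ^+ 2 / Etot E + \sum_(n < N) a * t n ^+ 2 / E n).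
  rewrite (eq_bigr (fun n => - 2 * ((1 - a) * T / Etot E * t n + a * t n ^+ 2 / E n))).
    by rewrite -mulr_sumr big_split /= -mulr_sumr -/T; ring.
  move=> n _; rewrite slope_ne_peak // -T_eq -/(t n).
  by field; rewrite Etot_neq0 gt_eqF.
have Tsq_ge0 : 0 <= (1 - a) * T ^+ 2 / Etot E.
  by apply: divr_ge0; [apply: mulr_ge0; [lra | exact: sqr_ge0] | exact/ltW/Etot_gt0].
have Q_terms_ge0 n : true -> 0 <= a * t n ^+ 2 / E n.
  by move=> _; apply: divr_ge0; [apply: mulr_ge0 => //; exact: sqr_ge0 | exact/ltW].
have Q_ge0 : 0 <= \sum_(n < N) a * t n ^+ 2 / E n by apply: sumr_ge0.
have Tsq_eq0 : (1 - a) * T ^+ 2 / Etot E = 0 by lra.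
have Q_eq0 : \sum_(n < N) a * t n ^+ 2 / E n = 0 by lra.
split.
  have /mul_sqr_eq0 : (1 - a) * T ^+ 2 = 0.
    by move/eqP: Tsq_eq0; rewrite mulf_eq0 invr_eq0 (negbTE Etot_neq0) orbF => /eqP.
  rewrite T_eq; lra.
move=> n; have /mul_sqr_eq0 : a * t n ^+ 2 = 0.
  have /eqP := @psumr_eq0P _ _ _ _ Q_terms_ge0 Q_eq0 n isT.
  by rewrite mulf_eq0 invr_eq0 (gt_eqF (E_gt0 n)) orbF => /eqP.
rewrite /t; lra.
Qed.

Lemma SC_feasible (a : R) (lP lO : 'I_N -> R) : (forall n, lP n + lO n = E n) ->
  SC E hlP hlO a lP lO = (1 - a) * (totload lP ^+ 2 + totload lO ^+ 2)
                         + 2 * a * \sum_(n < N) (lP n - hlP n) ^+ 2.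
Proof.
move=> l_sum; rewrite /SC.
rewrite (eq_bigr (fun n => (1 - a) * (totload lP ^+ 2 + totload lO ^+ 2) / Etot E * E n
                           + 2 * a * (lP n - hlP n) ^+ 2)).
  rewrite big_split /= -!mulr_sumr -/(Etot E); congr (_ + _).
  by rewrite divfK ?Etot_neq0.
move=> n _; have hlO_n : hlO n = E n - hlP n by rewrite -(hl_sum n); ring.
have lO_n : lO n = E n - lP n by rewrite -(l_sum n); ring.
rewrite /fobj /bill_DP /util lO_n hlO_n; ring.
Qed.

Lemma SC_NE (a : R) (lP lO : 'I_N -> R) : 0 <= a <= 1 -> is_NE E hlP hlO a lP lO ->
  SC E hlP hlO a lP lO = SC_formula E hlP hlO a.
Proof.
move=> a01 NE; have l_sum n : lP n + lO n = E n by case: (NE.1 n).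
have [load_eq peak_eq] := NE_ne_peak a01 NE.
pose c := totload hlP / Etot E - 1 / 2.
have LO_eq : totload lO = Etot E - totload lP by rewrite -(totload_sum l_sum); ring.
set LP := totload lP; set P := totload (ne_peak a).
rewrite SC_feasible // LO_eq.
have -> : (1 - a) * (LP ^+ 2 + (Etot E - LP) ^+ 2)
        = (1 - a) * (P ^+ 2 + (Etot E - P) ^+ 2)
          + (1 - a) * (LP - P) * (2 * (LP + P) - 2 * Etot E) by ring.
rewrite load_eq mul0r addr0 mulr_sumr.
rewrite (eq_bigr (fun n => 2 * a * ((1 - a) * c) ^+ 2 * E n ^+ 2)) => [|n _]; last first.
  have -> : lP n - hlP n = (lP n - ne_peak a n) - (1 - a) * c * E n by rewrite /ne_peak /c; ring.
  have -> : 2 * a * (lP n - ne_peak a n - (1 - a) * c * E n) ^+ 2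
          = 2 * (a * (lP n - ne_peak a n)) * (lP n - ne_peak a n - 2 * (1 - a) * c * E n)
            + 2 * a * ((1 - a) * c) ^+ 2 * E n ^+ 2 by ring.
  by rewrite peak_eq mulr0 mul0r add0r.
rewrite -mulr_sumr /P totload_ne_peak /SC_formula /Dgap /VE -/c.
have -> : totload hlO = Etot E - totload hlP by rewrite -(totload_sum hl_sum); ring.
rewrite /c; field; exact: Etot_neq0.
Qed.

Lemma SC_formula_decreasing (a b : R) : 0 <= a -> a < b -> b <= 1 ->
  SC_formula E hlP hlO b < SC_formula E hlP hlO a.
Proof.
move=> a_ge0 ab b_le1; apply: cubic_cost_decreasing => //.
- exact: Etot_gt0.
- by rewrite sqr_ge0 Dgap_sqr_le.
- by rewrite VE_ge0 VE_le1.
Qed.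

End DPGame.

Theorem theorem5 (R : realFieldType) (N : nat) (E hlP hlO : 'I_N -> R) :
  (0 < N)%N ->
  (forall n, 0 < E n) ->
  (forall n, 0 <= hlP n) -> (forall n, 0 <= hlO n) ->
  (forall n, hlP n + hlO n = E n) ->
  Etot E / 2 <= totload hlP -> totload hlO <= Etot E / 2 ->
  (forall n, totload hlP / Etot E <= hlP n / E n + 1 / 2) ->
  (forall (a : R) (lP lO : 'I_N -> R), 0 <= a <= 1 ->
     is_NE E hlP hlO a lP lO ->
     SC E hlP hlO a lP lO = SC_formula E hlP hlO a) /\
  (forall (a b : R) (lP lO lP' lO' : 'I_N -> R),
     0 <= a -> a < b -> b <= 1 ->
     is_NE E hlP hlO a lP lO -> is_NE E hlP hlO b lP' lO' ->
     SC E hlP hlO b lP' lO' < SC E hlP hlO a lP lO).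
Proof.
(* the off-peak bound follows from the per-user sums and the peak bound *)
move=> N_gt0 E_gt0 hlP_ge0 hlO_ge0 hl_sum peak_heavy _ peak_share_bound.
have SC_eq := SC_NE N_gt0 E_gt0 hlO_ge0 hl_sum peak_heavy peak_share_bound.
split=> // a b lP lO lP' lO' a_ge0 ab b_le1 NE_a NE_b.
have a01 : 0 <= a <= 1 by apply/andP; split; lra.
have b01 : 0 <= b <= 1 by apply/andP; split; lra.
rewrite (SC_eq _ _ _ a01 NE_a) (SC_eq _ _ _ b01 NE_b).
exact: SC_formula_decreasing.
Qed.
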